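(* Let $\mathbb{K}$ be an algebraically closed field of characteristic zero and $N=2m\ge 2$ even. Then $\operatorname{Der}(\mathcal{H}_{N})\cong \mathcal{H}_{N}$.
   Context: Let $A_N=\mathbb{K}[t_1^{\pm1},\dots,t_N^{\pm1}]$, $d_i=t_i\frac{\partial}{\partial t_i}$, and $t^{\bm r}=t_1^{r_1}\cdots t_N^{r_N}$ for $\bm r\in\mathbb{Z}^N$. Let $(\cdot,\cdot)$ be the standard bilinear form on $\mathbb{K}^N$, $(e_i,e_j)=\delta_{ij}$. For $u\in\mathbb{K}^N$, $\bm r\in\mathbb{Z}^N$ put $D(u,\bm r)=\sum_i u_i t^{\bm r}d_i$. Let $\bm J=\begin{pmatrix} O_m & I_m\\ -I_m & O_m\end{pmatrix}$, $\overline{\bm r}=\bm J\bm r$, $h_{\bm r}=D(\overline{\bm r},\bm r)$ (so $h_{\bm 0}=0$), $\mathfrak h=\operatorname{span}_{\mathbb{K}}\{d_1,\dots,d_N\}$. The Hamiltonian Lie algebra is $\mathcal{H}_N=\operatorname{span}_{\mathbb{K}}\{h_{\bm r}:\bm r\ne\bm 0\}\oplus\mathfrak h$ with commutator bracket, $[h_{\bm r},h_{\bm s}]=(\overline{\bm r},\bm s)h_{\bm r+\bm s}$, $[D(u,\bm 0),h_{\bm r}]=(u,\bm r)h_{\bm r}$. $\operatorname{Der}$ denotes the Lie algebra of derivations. *)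

From HB Require Import structures.
From mathcomp Require Import all_boot all_order all_algebra.
From mathcomp Require Import finmap.
From mathcomp Require Import monalg.

Set Implicit Arguments.
Unset Strict Implicit.
Unset Printing Implicit Defensive.

Import Order.TTheory GRing.Theory Num.Theory.
Local Open Scope ring_scope.

Section Hamiltonian.
Variables (K : fieldType) (m : nat).

(* N = 2m = m + m; vectors r in Z^N are integer column vectors. *)
Definition latt := 'cV[int]_(m + m).

Definition Jmx : 'M[int]_(m + m) := block_mx 0 1%:M (- 1%:M) 0.

Definition rbar (r : latt) : latt := Jmx *m r.

Definition pairK (u s : latt) : K := \sum_(i < m + m) ((u i 0) * (s i 0))%:~R.

(* Basis of H_N: h_r for r <> 0 (tag inl), and d_i for i < N (tag inr),
   where d_1,...,d_N span the abelian subalgebra \mathfrak h. *)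
Definition HKey := ({r : latt | r != 0} + 'I_(m + m))%type.

Definition HN := {malg K[HKey]}.

(* h_r as an element of H_N, with the convention h_0 = 0 *)
Definition hvec (c : K) (t : latt) : HN :=
  match insub t with
  | Some t' => << c *g (inl t' : HKey) >>
  | None => 0
  end.

Definition basis_br (a b : HKey) : HN :=
  match a, b with
  | inl r, inl s => hvec (pairK (rbar (val r)) (val s)) (val r + val s)
  | inr i, inl s => << ((val s) i 0)%:~R *g (inl s : HKey) >>
  | inl r, inr j => << (- ((val r) j 0)%:~R) *g (inl r : HKey) >>
  | inr _, inr _ => 0
  end.

Definition Hbr (x y : HN) : HN :=
  \sum_(a <- msupp x) \sum_(b <- msupp y) (x@_a * y@_b) *: basis_br a b.

Definition is_derivation (D : HN -> HN) : Prop :=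
  (forall (c : K) (x y : HN), D (c *: x + y) = c *: D x + D y) /\
  (forall x y : HN, D (Hbr x y) = Hbr (D x) y + Hbr x (D y)).

Definition Der_iso_HN : Prop :=
  exists phi : (HN -> HN) -> HN,
    [/\ (forall (a b : K) (D1 D2 : HN -> HN),
           is_derivation D1 -> is_derivation D2 ->
           phi (fun x => a *: D1 x + b *: D2 x) = a *: phi D1 + b *: phi D2),
        (forall D1 D2 : HN -> HN,
           is_derivation D1 -> is_derivation D2 ->
           phi (fun x => D1 (D2 x) - D2 (D1 x)) = Hbr (phi D1) (phi D2)),
        (forall D1 D2 : HN -> HN,
           is_derivation D1 -> is_derivation D2 -> phi D1 = phi D2 -> D1 = D2)
      & (forall y : HN, exists2 D, is_derivation D & phi D = y)].

End Hamiltonian.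

From HB Require Import structures.
From mathcomp Require Import all_boot all_order all_algebra.
From mathcomp Require Import finmap monalg.
From mathcomp Require Import ring zify.
From Stdlib Require Import ClassicalEpsilon FunctionalExtensionality.

(* Every derivation is inner and the centre is trivial, so
   [ad : H_N -> Der(H_N)] is a Lie algebra isomorphism (the Jacobi identity
   makes it a homomorphism).  Given a derivation [D], subtracting a suitable
   [ad x] kills the [h]-components of every [D d_i]; then [D d_i = 0], so [D h_t]
   is a common eigenvector of the [ad d_i] with weight [t], i.e. [D h_t = E t h_t].
   Applying [D] to [[h_r, h_s] = omega(r,s) h_(r+s)] gives [E (r + s) = E r + E s]
   whenever [omega(r,s) != 0]; as finitely many nonzero forms [omega(a, .)] have a
   common non-root, [E] is additive, and [D = ad (sum_j E(e_j) d_j)]. *)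

Set Implicit Arguments.
Unset Strict Implicit.
Unset Printing Implicit Defensive.

Import Order.TTheory GRing.Theory Num.Theory.
Local Open Scope ring_scope.

Section SymplecticLattice.
Variable m : nat.
Local Notation latt := (latt m).
Implicit Types (p q r s t u v : latt) (l : seq latt).

Lemma latt_neq0P s : s != 0 -> exists j, s j 0 != 0.
Proof.
move=> s0; apply/existsP; apply: contraR s0 => /existsPn s0.
by apply/eqP/matrixP => i k; rewrite ord1 mxE; apply/eqP/negPn.
Qed.

Lemma delta_neq0 j : delta_mx j 0 != 0 :> latt.
Proof. by apply/eqP => /matrixP /(_ j 0); rewrite !mxE !eqxx. Qed.

Lemma addrr_eq0 s : (s + s == 0) = (s == 0).
Proof.
apply/eqP/eqP => [/matrixP ss|->]; last by rewrite addr0.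
by apply/matrixP => i j; have /eqP := ss i j; rewrite !mxE -mulr2n mulrn_eq0 => /eqP.
Qed.

Definition dot u s : int := \sum_(i < m + m) u i 0 * s i 0.

Lemma dotE u s : dot u s = (u^T *m s) 0 0.
Proof. by rewrite mxE; apply: eq_bigr => i _; rewrite mxE. Qed.

Lemma dotDl u v s : dot (u + v) s = dot u s + dot v s.
Proof. by rewrite !dotE linearD /= mulmxDl mxE. Qed.

Lemma dotDr u s t : dot u (s + t) = dot u s + dot u t.
Proof. by rewrite !dotE mulmxDr mxE. Qed.

Lemma dotZr u (c : int) s : dot u (c *: s) = c * dot u s.
Proof. by rewrite !dotE -scalemxAr mxE. Qed.

Lemma dot0l s : dot 0 s = 0.
Proof. by rewrite dotE trmx0 mul0mx mxE. Qed.

Lemma dot0r u : dot u 0 = 0.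
Proof. by rewrite dotE mulmx0 mxE. Qed.

Lemma dot_delta i s : dot (delta_mx i 0) s = s i 0.
Proof.
rewrite /dot (bigD1 i) //= big1 ?addr0 => [|j ji]; first by rewrite mxE !eqxx mul1r.
by rewrite mxE (negPf ji) mul0r.
Qed.

Lemma dot_self_eq0 u : (dot u u == 0) = (u == 0).
Proof.
apply/idP/eqP => [|->]; last by rewrite dot0l.
rewrite psumr_eq0 => [/allP u0|i _]; last by rewrite -expr2 sqr_ge0.
apply/matrixP => i j; rewrite ord1 mxE.
by move: (u0 i (mem_index_enum _)); rewrite /= mulf_eq0 orbb => /eqP.
Qed.

Lemma pairKE (K : fieldType) u s : pairK K u s = (dot u s)%:~R.
Proof. by rewrite /pairK rmorph_sum. Qed.

Lemma rbarD p q : rbar (p + q) = rbar p + rbar q.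
Proof. exact: mulmxDr. Qed.

Lemma rbarK p : rbar (rbar p) = - p.
Proof.
rewrite /rbar mulmxA /Jmx mulmx_block !mulmx0 !mul0mx !addr0 !add0r.
rewrite mulmxN mulNmx !mul1mx.
have -> : block_mx (- 1%:M) 0 0 (- 1%:M) = - (1%:M : 'M[int]_(m + m)).
  by rewrite (scalar_mx_block m m 1) opp_block_mx !oppr0.
by rewrite mulNmx mul1mx.
Qed.

Lemma trmx_Jmx : (Jmx m)^T = - Jmx m.
Proof.
rewrite /Jmx tr_block_mx opp_block_mx !trmx0 !oppr0 linearN /= tr_scalar_mx.
by rewrite opprK.
Qed.

Definition omega p q : int := dot (rbar p) q.

Lemma omegaDl p q s : omega (p + q) s = omega p s + omega q s.
Proof. by rewrite /omega rbarD dotDl. Qed.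

Lemma omegaDr p q s : omega p (q + s) = omega p q + omega p s.
Proof. exact: dotDr. Qed.

Lemma omegaZr p (c : int) q : omega p (c *: q) = c * omega p q.
Proof. exact: dotZr. Qed.

Lemma omegaNr p q : omega p (- q) = - omega p q.
Proof. by rewrite -scaleN1r omegaZr mulN1r. Qed.

Lemma omega0l s : omega 0 s = 0.
Proof. by rewrite /omega /rbar mulmx0 dot0l. Qed.

Lemma omega0r p : omega p 0 = 0.
Proof. exact: dot0r. Qed.

Lemma omegaE p q : omega p q = - (p^T *m Jmx m *m q) 0 0.
Proof. by rewrite /omega dotE /rbar trmx_mul trmx_Jmx mulmxN mulNmx mxE. Qed.

Lemma omega_anti p q : omega q p = - omega p q.
Proof.
rewrite !omegaE opprK -[in LHS](trmxK (q^T *m _ *m _)) [_^T^T 0 0]mxE.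
by rewrite !trmx_mul trmxK trmx_Jmx mulNmx mulmxN mulmxA mxE opprK.
Qed.

Lemma omega_self p : omega p p = 0.
Proof. by have := omega_anti p p; lia. Qed.

Lemma omega_rbar_neq0 p : p != 0 -> omega p (rbar p) != 0.
Proof.
move=> p0; rewrite /omega dot_self_eq0; apply: contra p0 => /eqP/(congr1 (@rbar m)).
by rewrite rbarK /rbar mulmx0 => /eqP; rewrite oppr_eq0.
Qed.

(* If [omega a t = 0], move [t] to [rbar a + n t]: [omega a (rbar a) != 0], while [n]
   exceeds every [|omega b (rbar a)|], so [omega b t != 0] survives. *)
Lemma omega_avoid l : all (fun a => a != 0) l ->
  exists t, all (fun a => omega a t != 0) l.
Proof.
elim: l => [|a l IH] /=; first by exists 0.
move=> /andP[a0 /IH [t lt]].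
have [at0|at0] := eqVneq (omega a t) 0; last by exists t; rewrite at0.
pose n : int := 1 + \sum_(c <- l) `|omega c (rbar a)|.
exists (rbar a + n *: t); rewrite omegaDr omegaZr at0 mulr0 addr0 omega_rbar_neq0 //=.
apply/allP => b bl; rewrite omegaDr omegaZr.
have bt : omega b t != 0 by move/allP: lt => /(_ b bl).
have : `|omega b (rbar a)| <= \sum_(c <- l) `|omega c (rbar a)|.
  rewrite (big_rem b bl) /= lerDl sumr_ge0 // => c _.
rewrite /n; move: bt; set S := \sum_(_ <- _) _; set x := omega b _; set y := omega b t.
move=> ? ?; nia.
Qed.

Definition beta p v q w : int := omega p q + dot v q - dot w p.

Lemma beta_jacobi p v q w s u :
  (p = 0 \/ v = 0) -> (q = 0 \/ w = 0) -> (s = 0 \/ u = 0) ->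
  beta q w s u * beta p v (q + s) 0 =
  beta p v q w * beta (p + q) 0 s u + beta p v s u * beta q w (p + s) 0.
Proof.
rewrite /beta !omegaDl !omegaDr !dotDr !dot0l (omega_anti q p).
by do 3![case=> ->]; rewrite ?omega0l ?omega0r ?dot0l ?dot0r; ring.
Qed.

Section OmegaAdditive.
Variables (V : zmodType) (E : latt -> V).
Hypotheses (E0 : E 0 = 0) (E_omega : forall r s, omega r s != 0 -> E (r + s) = E r + E s).

(* Route [r + s] through an auxiliary [t] so that every sum involved has a nonzero [omega]. *)
Lemma omega_additiveD_nz r s : r != 0 -> s != 0 -> r + s != 0 -> E (r + s) = E r + E s.
Proof.
move=> r0 s0 rs0.
have := @omega_avoid [:: r + s; s; r]; rewrite /= rs0 s0 r0 => /(_ isT).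
case=> t /and4P[rst st rt _].
have [t' [rst' st' rt']] : exists t',
    [/\ omega (r + s) t' != 0, omega s t' != 0 & omega r (s + t') != 0].
  have [rst0|rst0] := eqVneq (omega r s + omega r t) 0.
    by exists (t + t); rewrite !omegaDr; split; move: rst st rt rst0; lia.
  by exists t; rewrite omegaDr.
by have := E_omega rt'; rewrite addrA (E_omega rst') (E_omega st') addrA => /addIr.
Qed.

Lemma omega_additiveN r : E (- r) = - E r.
Proof.
have [->|r0] := eqVneq r 0; first by rewrite oppr0 E0 oppr0.
have rr0 : r + r != 0 by rewrite addrr_eq0.
have := @omega_additiveD_nz (- r) (r + r); rewrite oppr_eq0 addKr r0 rr0.
rewrite (omega_additiveD_nz r0 r0 rr0) => /(_ isT isT isT) /eqP; rewrite -subr_eq => /eqP <-.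
by rewrite opprD addrA subrr sub0r.
Qed.

Lemma omega_additiveD : {morph E : r s / r + s}.
Proof.
move=> r s; have [->|r0] := eqVneq r 0; first by rewrite add0r E0 add0r.
have [->|s0] := eqVneq s 0; first by rewrite addr0 E0 addr0.
have [rs|rs0] := eqVneq (r + s) 0; last exact: omega_additiveD_nz.
by move/eqP: rs; rewrite addr_eq0 => /eqP ->; rewrite omega_additiveN !addNr E0.
Qed.

Lemma omega_additiveB : zmod_morphism E.
Proof. by move=> r s; rewrite omega_additiveD omega_additiveN. Qed.

HB.instance Definition _ := GRing.isZmodMorphism.Build latt V E omega_additiveB.

Lemma omega_additive_delta t : E t = \sum_(j < m + m) E (delta_mx j 0) *~ t j 0.
Proof.
rewrite {1}(matrix_sum_delta t) raddf_sum; apply: eq_bigr => j _.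
rewrite big_ord1 (_ : ord0 = 0); last exact: val_inj.
by rewrite -{1}[t j 0]intz scaler_int raddfMz.
Qed.

End OmegaAdditive.

End SymplecticLattice.

Section Hamiltonian.
Variables (K : fieldType) (m : nat).
Local Notation HN := (HN K m).
Local Notation HKey := (HKey m).
Local Notation latt := (latt m).
Local Notation nzlatt := {r : latt | r != 0}.
Local Notation Hbr := (@Hbr K m).
Local Notation basis_br := (@basis_br K m).
Local Notation hvec := (@hvec K m).
Implicit Types (p q r s t u v w : latt) (a b k : HKey) (x y z : HN).

Definition bvec k : HN := << k >>.

Lemma monalgU_bvec (c : K) k : << c *g k >> = c *: bvec k :> HN.
Proof. by apply/malgP => k'; rewrite mcoeffZ !mcoeffU mulr_natr. Qed.

Lemma mcoeff_bvec k k' : (bvec k)@_k' = (k == k')%:R.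
Proof. exact: mcoeffU. Qed.

Lemma bvec_expand x : x = \sum_(k <- msupp x) x@_k *: bvec k.
Proof. by rewrite {1}[x]monalgE; apply: eq_bigr => k _; rewrite monalgU_bvec. Qed.

Definition linext (F : HKey -> HN) (x : HN) : HN := \sum_(k <- msupp x) x@_k *: F k.

Lemma linextEw F x (d : {fset HKey}) : (msupp x `<=` d)%fset ->
  linext F x = \sum_(k <- d) x@_k *: F k.
Proof.
move=> le; rewrite /linext (big_fset_incl _ le) // => k _ /mcoeff_outdom ->.
by rewrite scale0r.
Qed.

Lemma linext_is_linear F : linear (linext F).
Proof.
move=> c x y; set d := (msupp x `|` msupp y)%fset.
have hxy : (msupp (c *: x + y) `<=` d)%fset.
  by apply: fsubset_trans (msuppD_le _ _) _; rewrite fsetUSS // msuppZ_le.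
rewrite (linextEw _ hxy) (linextEw F (fsubsetUl _ (msupp y))).
rewrite (linextEw F (fsubsetUr (msupp x) _)) scaler_sumr -big_split /=.
by apply: eq_bigr => k _; rewrite mcoeffD mcoeffZ scalerDl scalerA.
Qed.

HB.instance Definition _ F :=
  GRing.isLinear.Build K HN HN *:%R (linext F) (linext_is_linear F).

Lemma linext_bvec F k : linext F (bvec k) = F k.
Proof. by rewrite /linext /bvec msuppU oner_eq0 big_seq_fset1 mcoeffUU scale1r. Qed.

Lemma eq_linext F G x : F =1 G -> linext F x = linext G x.
Proof. by move=> FG; apply: eq_bigr => k _; rewrite FG. Qed.

Lemma linext_fun_linear F G (c : K) x :
  linext (fun k => c *: F k + G k) x = c *: linext F x + linext G x.
Proof.
rewrite /linext scaler_sumr -big_split; apply: eq_bigr => k _.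
by rewrite scalerDr !scalerA mulrC.
Qed.

Lemma mcoeff_linext F x k : (linext F x)@_k = \sum_(a <- msupp x) x@_a * (F a)@_k.
Proof. by rewrite raddf_sum; apply: eq_bigr => a _; apply: mcoeffZ. Qed.

Section LinearMap.
Variables (f : HN -> HN) (f_lin : linear f).
HB.instance Definition _ := GRing.isLinear.Build K HN HN *:%R f f_lin.

Lemma linear_bvecE x : f x = \sum_(k <- msupp x) x@_k *: f (bvec k).
Proof. by rewrite {1}(bvec_expand x) linear_sum; apply: eq_bigr => k _; rewrite linearZ. Qed.

End LinearMap.

Lemma linear_bvec_ext (f g : HN -> HN) : linear f -> linear g ->
  (forall k, f (bvec k) = g (bvec k)) -> f =1 g.
Proof.
move=> lf lg fg x; rewrite (linear_bvecE lf) (linear_bvecE lg).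
by apply: eq_bigr => k _; rewrite fg.
Qed.

Definition hbasis t : HN := hvec 1 t.

Lemma hvecE (c : K) t : hvec c t = c *: hbasis t.
Proof.
rewrite /hbasis /hvec; case: insubP => [u _ _|_]; last by rewrite scaler0.
by rewrite !monalgU_bvec scalerA mulr1.
Qed.

Lemma hbasis0 : hbasis 0 = 0.
Proof. by rewrite /hbasis /hvec insubF ?eqxx. Qed.

Lemma hbasis_val (r : nzlatt) : hbasis (val r) = bvec (inl r).
Proof. by rewrite /hbasis /hvec valK monalgU_bvec scale1r. Qed.

Lemma mcoeff_hbasis_inl t (r : nzlatt) : (hbasis t)@_(inl r) = (t == val r)%:R.
Proof.
have [->|t0] := eqVneq t 0; first by rewrite hbasis0 mcoeff0 eq_sym (negPf (valP r)).
by rewrite -[t]/(val (Sub t t0 : nzlatt)) hbasis_val mcoeff_bvec.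
Qed.

(* The basis vector [a] is [h_(kdeg a) + D(kvec a, 0)], where one of the two
   summands vanishes; [beta] is the structure constant of the bracket in this form. *)
Definition kdeg a : latt := if a is inl r then val r else 0.
Definition kvec a : latt := if a is inr i then delta_mx i 0 else 0.

Lemma basis_brE a b : basis_br a b =
  (beta (kdeg a) (kvec a) (kdeg b) (kvec b))%:~R *: hbasis (kdeg a + kdeg b).
Proof.
rewrite /beta; case: a => [r|i]; case: b => [s|j] /=.
- by rewrite hvecE pairKE !dot0l subr0 addr0.
- by rewrite monalgU_bvec -hbasis_val addr0 dot_delta omega0r dot0r add0r intrN.
- by rewrite monalgU_bvec -hbasis_val add0r dot_delta omega0l dot0r subr0 add0r.
- by rewrite addr0 hbasis0 scaler0.
Qed.

Lemma HbrE x y : Hbr x y = linext (fun a => linext (basis_br a) y) x.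
Proof.
rewrite /Hbr /linext; apply: eq_bigr => a _; rewrite scaler_sumr.
by apply: eq_bigr => b _; rewrite scalerA.
Qed.

Lemma Hbr_is_bilinear : bilinear_for *:%R *:%R Hbr.
Proof.
split=> [y|x] c u v; rewrite !HbrE; first exact: linearP.
by rewrite -linext_fun_linear; apply: eq_linext => a; apply: linearP.
Qed.

HB.instance Definition _ :=
  bilinear_isBilinear.Build K HN HN HN *:%R *:%R Hbr Hbr_is_bilinear.

Lemma Hbr_bvec a b : Hbr (bvec a) (bvec b) = basis_br a b.
Proof. by rewrite HbrE !linext_bvec. Qed.

Lemma Hbr_bvec_hbasis a t :
  Hbr (bvec a) (hbasis t) = (beta (kdeg a) (kvec a) t 0)%:~R *: hbasis (kdeg a + t).
Proof.
have [->|t0] := eqVneq t 0.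
  by rewrite hbasis0 linear0r /beta omega0r dot0r dot0l subr0 addr0 scale0r.
by rewrite -[t]/(val (Sub t t0 : nzlatt)) hbasis_val Hbr_bvec basis_brE.
Qed.

Lemma Hbr_hbasis_bvec t b :
  Hbr (hbasis t) (bvec b) = (beta t 0 (kdeg b) (kvec b))%:~R *: hbasis (t + kdeg b).
Proof.
have [->|t0] := eqVneq t 0.
  by rewrite hbasis0 linear0l /beta omega0l dot0l dot0r subr0 addr0 scale0r.
by rewrite -[t]/(val (Sub t t0 : nzlatt)) hbasis_val Hbr_bvec basis_brE.
Qed.

Lemma Hbr_hbasis r s : Hbr (hbasis r) (hbasis s) = (omega r s)%:~R *: hbasis (r + s).
Proof.
have [->|r0] := eqVneq r 0; first by rewrite hbasis0 linear0l omega0l scale0r.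
rewrite -[r]/(val (Sub r r0 : nzlatt)) hbasis_val Hbr_bvec_hbasis.
by rewrite /beta !dot0l subr0 addr0.
Qed.

Lemma kdeg_kvec a : kdeg a = 0 \/ kvec a = 0.
Proof. by case: a => [r|i]; [right|left]. Qed.

Lemma Hbr_jacobi_bvec a b c : Hbr (bvec a) (Hbr (bvec b) (bvec c)) =
  Hbr (Hbr (bvec a) (bvec b)) (bvec c) + Hbr (bvec b) (Hbr (bvec a) (bvec c)).
Proof.
rewrite !Hbr_bvec !basis_brE linearZl linearZr /= !linearZr /= Hbr_bvec_hbasis.
rewrite Hbr_hbasis_bvec Hbr_bvec_hbasis !scalerA !addrA [kdeg b + kdeg a]addrC.
by rewrite -scalerDl -!intrM -intrD beta_jacobi //; apply: kdeg_kvec.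
Qed.

Lemma Hbr_jacobi x y z : Hbr x (Hbr y z) = Hbr (Hbr x y) z + Hbr y (Hbr x z).
Proof.
have jac_bvec2 a b z' : Hbr (bvec a) (Hbr (bvec b) z') =
    Hbr (Hbr (bvec a) (bvec b)) z' + Hbr (bvec b) (Hbr (bvec a) z').
  move: z'; apply: linear_bvec_ext => [c u v|c u v|]; last exact: Hbr_jacobi_bvec.
    by rewrite !linearPr.
  by rewrite !linearPr scalerDr addrACA.
have jac_bvec1 a y' : Hbr (bvec a) (Hbr y' z) =
    Hbr (Hbr (bvec a) y') z + Hbr y' (Hbr (bvec a) z).
  move: y'; apply: linear_bvec_ext => [c u v|c u v|b]; last exact: jac_bvec2.
    by rewrite linearPl linearPr.
  by rewrite linearPr !linearPl scalerDr addrACA.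
move: x; apply: linear_bvec_ext => [c u v|c u v|a]; last exact: jac_bvec1.
  exact: linearPl.
by rewrite !linearPl linearPr scalerDr addrACA.
Qed.

Lemma mcoeff_linext_diag (f : HKey -> K) y k :
  (linext (fun b => f b *: bvec b) y)@_k = f k * y@_k.
Proof.
rewrite mcoeff_linext.
have [ky|ky] := boolP (k \in msupp y); last first.
  rewrite mcoeff_outdom // mulr0 big1_fset // => b bk _.
  have /negPf bk' : b != k by apply: contraNneq ky => <-.
  by rewrite mcoeffZ mcoeff_bvec bk' !mulr0.
rewrite (big_fsetD1 k) //= mcoeffZ mcoeff_bvec eqxx mulr1 mulrC big1_fset ?addr0 // => b.
by rewrite in_fsetD1 mcoeffZ mcoeff_bvec => /andP[/negPf -> _] _; rewrite !mulr0.
Qed.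

Definition hweight i a : K := ((kdeg a) i 0)%:~R.

Lemma mcoeff_Hbr_dl i y k : (Hbr (bvec (inr i)) y)@_k = hweight i k * y@_k.
Proof.
rewrite HbrE linext_bvec -(mcoeff_linext_diag (hweight i)); congr mcoeff.
apply: eq_linext => -[s|j]; rewrite /basis_br.
  by rewrite monalgU_bvec.
by rewrite /hweight mxE scale0r.
Qed.

Lemma mcoeff_Hbr_dr i y k : (Hbr y (bvec (inr i)))@_k = - (hweight i k * y@_k).
Proof.
rewrite HbrE -mulNr -(mcoeff_linext_diag (fun a => - hweight i a)); congr mcoeff.
apply: eq_linext => -[s|j]; rewrite linext_bvec /basis_br.
  by rewrite monalgU_bvec.
by rewrite /hweight mxE oppr0 scale0r.
Qed.

Definition dvec (c : 'I_(m + m) -> K) : HN := \sum_j c j *: bvec (inr j).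

Lemma Hbr_dvec_hbasis c (r : nzlatt) :
  Hbr (dvec c) (bvec (inl r)) = (\sum_j c j * ((val r) j 0)%:~R) *: bvec (inl r).
Proof.
rewrite linear_sumlz scaler_suml; apply: eq_bigr => j _.
by rewrite linearZl /= Hbr_bvec /= monalgU_bvec scalerA.
Qed.

Lemma Hbr_dvec_d c i : Hbr (dvec c) (bvec (inr i)) = 0.
Proof. by rewrite linear_sumlz big1 // => j _; rewrite linearZl /= Hbr_bvec scaler0. Qed.

Lemma dvec_mcoeff y : (forall s : nzlatt, y@_(inl s) = 0) -> y = dvec (fun j => y@_(inr j)).
Proof.
move=> yh; apply/malgP => k; rewrite raddf_sum /=.
under eq_bigr do rewrite mcoeffZ mcoeff_bvec.
case: k => [s|j]; first by rewrite yh big1 // => j _; rewrite mulr0.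
rewrite (bigD1 j) //= eqxx mulr1 big1 ?addr0 // => i ij.
by case: eqP => [[/eqP]|]; rewrite ?(negPf ij) ?mulr0.
Qed.

Hypothesis char0 : [pchar K] =i pred0.

Lemma pchar0_intr_eq0 (z : int) : (z%:~R == 0 :> K) = (z == 0).
Proof.
have natf_eq0 := (pcharf0P K).1 char0.
by case: z => n; rewrite ?NegzE ?intrN ?oppr_eq0 /= natf_eq0.
Qed.

Lemma weight_vector (t : nzlatt) y :
  (forall i, Hbr (bvec (inr i)) y = ((val t) i 0)%:~R *: y) ->
  y = y@_(inl t) *: bvec (inl t).
Proof.
move=> ty; apply/malgP => k; rewrite mcoeffZ mcoeff_bvec.
have wk i : (((val t) i 0)%:~R - hweight i k) * y@_k = 0.
  by rewrite mulrBl -mcoeff_Hbr_dl ty mcoeffZ subrr.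
case: k wk => [s|j] wk /=.
- have [<-|st] := eqVneq t s; first by rewrite eqxx mulr1.
  have /negPf -> : inl t != inl s :> HKey by apply: contra st => /eqP[->].
  rewrite mulr0; have : val t - val s != 0.
    by rewrite subr_eq0; apply: contra st => /eqP/val_inj->.
  case/latt_neq0P => i; rewrite !mxE => tsi; apply/eqP.
  by have /eqP := wk i; rewrite mulf_eq0 /hweight /= -intrB pchar0_intr_eq0 (negPf tsi).
- rewrite mulr0; have [i ti] := latt_neq0P (valP t); apply/eqP.
  by have /eqP := wk i; rewrite /hweight /= mxE subr0 mulf_eq0 pchar0_intr_eq0 (negPf ti).
Qed.

Lemma Hbr_center_eq0 x : (forall y, Hbr x y = 0) -> x = 0.
Proof.
move=> xy.
have xh (s : nzlatt) : x@_(inl s) = 0.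
  have [j sj] := latt_neq0P (valP s).
  have /eqP := mcoeff_Hbr_dr j x (inl s).
  by rewrite xy mcoeff0 eq_sym oppr_eq0 mulf_eq0 /hweight pchar0_intr_eq0 (negPf sj) => /eqP.
rewrite (dvec_mcoeff xh); apply: big1 => j _.
pose r : nzlatt := Sub (delta_mx j 0) (delta_neq0 j).
have /(congr1 (mcoeff (inl r))) := xy (bvec (inl r)).
rewrite [in Hbr x _](dvec_mcoeff xh) Hbr_dvec_hbasis mcoeffZ mcoeff_bvec eqxx mulr1 mcoeff0.
rewrite (bigD1 j) //= big1 ?addr0 => [|i ij]; last by rewrite mxE (negPf ij) mulr0.
by rewrite mxE !eqxx mulr1 => ->; rewrite scale0r.
Qed.

Section Derivation.
Variable D : HN -> HN.
Hypothesis D_der : is_derivation D.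
HB.instance Definition _ := GRing.isLinear.Build K HN HN *:%R D D_der.1.
Let D_Leibniz : forall x y, D (Hbr x y) = Hbr (D x) y + Hbr x (D y) := D_der.2.

Lemma derivation_d_mcoeff_comm i j (s : nzlatt) :
  (D (bvec (inr i)))@_(inl s) * ((val s) j 0)%:~R =
  ((val s) i 0)%:~R * (D (bvec (inr j)))@_(inl s).
Proof.
have /(congr1 (mcoeff (inl s))) := D_Leibniz (bvec (inr i)) (bvec (inr j)).
rewrite Hbr_bvec linear0 mcoeff0 mcoeffD mcoeff_Hbr_dr mcoeff_Hbr_dl /hweight /=.
by move/eqP; rewrite eq_sym addrC subr_eq0 => /eqP ->; rewrite mulrC.
Qed.

(* [x_s = - (sum_j s_j (D d_j)_s) / |s|^2] works because
   [s_i (D d_j)_s = s_j (D d_i)_s]. *)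
Lemma derivation_normalize : exists x,
  forall i (s : nzlatt), (D (bvec (inr i)) - Hbr x (bvec (inr i)))@_(inl s) = 0.
Proof.
pose sqn (k : HKey) : K := (dot (kdeg k) (kdeg k))%:~R.
pose x := - \sum_j linext (fun k => (hweight j k / sqn k) *: bvec k) (D (bvec (inr j))).
exists x => i s; rewrite mcoeffB mcoeff_Hbr_dr opprK mcoeffN raddf_sum /=.
under eq_bigr do rewrite mcoeff_linext_diag.
have sqn0 : sqn (inl s) != 0 by rewrite pchar0_intr_eq0 dot_self_eq0 (valP s).
have sqnE : sqn (inl s) = \sum_j ((val s) j 0 * (val s) j 0)%:~R.
  by rewrite /sqn /dot rmorph_sum.
apply/eqP; rewrite mulrN subr_eq0 eq_sym mulr_sumr; apply/eqP.
transitivity (\sum_j (D (bvec (inr i)))@_(inl s) *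
                ((val s) j 0 * (val s) j 0)%:~R / sqn (inl s)).
  apply: eq_bigr => j _; rewrite /hweight /= mulrCA -derivation_d_mcoeff_comm intrM; ring.
by rewrite -mulr_suml -mulr_sumr -sqnE mulfK.
Qed.

Section Normalized.
Hypothesis D_d_normal : forall i (s : nzlatt), (D (bvec (inr i)))@_(inl s) = 0.

Lemma derivation_d_eq0 i : D (bvec (inr i)) = 0.
Proof.
rewrite (dvec_mcoeff (D_d_normal i)); apply: big1 => j _.
pose t : nzlatt := Sub (delta_mx j 0) (delta_neq0 j).
have /(congr1 (mcoeff (inl t))) := D_Leibniz (bvec (inr i)) (bvec (inl t)).
rewrite Hbr_bvec /basis_br monalgU_bvec linearZ mcoeffD mcoeffZ mcoeff_Hbr_dl.
rewrite [in Hbr (D _) _](dvec_mcoeff (D_d_normal i)) Hbr_dvec_hbasis.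
rewrite mcoeffZ mcoeff_bvec eqxx mulr1.
rewrite /hweight /= => /eqP; rewrite eq_sym -subr_eq0 addrK => /eqP.
rewrite (bigD1 j) //= big1 ?addr0 => [|k kj]; last by rewrite mxE (negPf kj) mulr0.
by rewrite mxE !eqxx mulr1 => ->; rewrite scale0r.
Qed.

Lemma derivation_hbasis_eigen (t : nzlatt) :
  D (bvec (inl t)) = (D (bvec (inl t)))@_(inl t) *: bvec (inl t).
Proof.
apply: weight_vector => i.
have := D_Leibniz (bvec (inr i)) (bvec (inl t)).
by rewrite derivation_d_eq0 linear0l add0r Hbr_bvec /basis_br monalgU_bvec linearZ.
Qed.

(* The eigenvalue of [D] on [h_t], with default [0] at [t = 0] (where [h_0 = 0]). *)
Definition dweight (t : latt) : K :=
  oapp (fun u : nzlatt => (D (bvec (inl u)))@_(inl u)) 0 (insub t).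

Lemma derivation_hbasis t : D (hbasis t) = dweight t *: hbasis t.
Proof.
have [->|t0] := eqVneq t 0; first by rewrite hbasis0 linear0 scaler0.
rewrite -[t]/(val (Sub t t0 : nzlatt)) hbasis_val /dweight valK.
exact: derivation_hbasis_eigen.
Qed.

Lemma dweight0 : dweight 0 = 0.
Proof. by rewrite /dweight insubF ?eqxx. Qed.

Lemma dweight_omega r s : omega r s != 0 -> dweight (r + s) = dweight r + dweight s.
Proof.
move=> rs.
have rs0 : r + s != 0.
  apply: contra rs => /eqP rs0.
  by rewrite -[s](addKr r) rs0 addr0 omegaNr omega_self oppr0.
have w0 : (omega r s)%:~R != 0 :> K by rewrite pchar0_intr_eq0.
apply: (mulIf w0); rewrite mulrDl.
have /(congr1 (mcoeff (inl (Sub (r + s) rs0 : nzlatt)))) := D_Leibniz (hbasis r) (hbasis s).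
rewrite Hbr_hbasis linearZ /= !derivation_hbasis linearZl linearZr /= !Hbr_hbasis.
rewrite !scalerA -scalerDl !mcoeffZ mcoeff_hbasis_inl /= eqxx !mulr1 => <-.
exact: mulrC.
Qed.

Lemma derivation_normal_inner : exists d, D =1 Hbr d.
Proof.
exists (dvec (fun j => dweight (delta_mx j 0))).
apply: linear_bvec_ext => [c x y|c x y|[t|i]].
- exact: linearP.
- exact: linearPr.
- rewrite derivation_hbasis_eigen Hbr_dvec_hbasis; congr (_ *: _).
  have -> : (D (bvec (inl t)))@_(inl t) = dweight (val t) by rewrite /dweight valK.
  rewrite (omega_additive_delta dweight0 dweight_omega).
  by apply: eq_bigr => j _; rewrite mulrzr.
- by rewrite derivation_d_eq0 Hbr_dvec_d.
Qed.

End Normalized.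

End Derivation.

Lemma Hbr_is_derivation x : is_derivation (Hbr x).
Proof. by split=> [c y z|y z]; [apply: linearPr | apply: Hbr_jacobi]. Qed.

Lemma derivationB (D1 D2 : HN -> HN) :
  is_derivation D1 -> is_derivation D2 -> is_derivation (fun x => D1 x - D2 x).
Proof.
move=> [lin1 der1] [lin2 der2]; split=> [c x y|x y].
  by rewrite lin1 lin2 scalerBr addrACA opprD.
by rewrite der1 der2 linearBl linearBr opprD addrACA.
Qed.

Lemma derivation_inner (D : HN -> HN) : is_derivation D -> exists x, D = Hbr x.
Proof.
move=> Dder; have [x Dx] := derivation_normalize Dder.
have [d D'd] := derivation_normal_inner (derivationB Dder (Hbr_is_derivation x)) Dx.
by exists (d + x); apply: functional_extensionality => z; rewrite linearDl /= -D'd subrK.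
Qed.

Lemma Hbr_inj : injective Hbr.
Proof.
move=> x y xy; apply/eqP; rewrite -subr_eq0; apply/eqP.
by apply: Hbr_center_eq0 => z; rewrite linearBl /= xy subrr.
Qed.

Definition ad_inv (D : HN -> HN) : HN := epsilon (inhabits 0) (fun x => D = Hbr x).

Lemma ad_invP D : is_derivation D -> D = Hbr (ad_inv D).
Proof.
by move=> Dder; apply: (epsilon_spec _ (fun x => D = Hbr x)); apply: derivation_inner.
Qed.

Lemma HbrK : cancel Hbr ad_inv.
Proof. by move=> x; apply: Hbr_inj; rewrite -ad_invP //; apply: Hbr_is_derivation. Qed.

End Hamiltonian.

Theorem theorem4p6 (K : closedFieldType) (m : nat) :
  [pchar K] =i pred0 -> (0 < m)%N -> Der_iso_HN K m.
Proof.
move=> char0 _; exists (@ad_inv K m); split.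
- move=> a b D1 D2 /(ad_invP char0) -> /(ad_invP char0) ->.
  rewrite !HbrK // -[RHS](HbrK char0); congr ad_inv.
  by apply: functional_extensionality => z; rewrite linearDl !linearZl.
- move=> D1 D2 /(ad_invP char0) -> /(ad_invP char0) ->.
  rewrite !HbrK // -[RHS](HbrK char0); congr ad_inv.
  by apply: functional_extensionality => z; rewrite Hbr_jacobi addrK.
- by move=> D1 D2 /(ad_invP char0) D1E /(ad_invP char0) D2E e; rewrite D1E D2E e.
- by move=> y; exists (Hbr y); [apply: Hbr_is_derivation | apply: HbrK].
Qed.
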